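(* Let $k\geq 2$ be an integer and let $A=[\bm{a}_1,\dots,\bm{a}_n]\in\mathbb{R}^{m\times n}$ have columns with $\|\bm{a}_i\|_2=1$ for all $i$. Suppose the mutual coherence $\mu=\max_{1\leq i<j\leq n}|\langle \bm{a}_i,\bm{a}_j\rangle|$ satisfies $\mu<\frac{1}{2k-1}$. Let $\lambda>0$, let $\bm{x}\in\mathbb{R}^n$ be arbitrary, let $\bm{z}\in\mathbb{R}^m$ with $\|\bm{z}\|_2\leq\lambda$, and set $\bm{b}=A\bm{x}+\bm{z}$. Let $\bm{x}^{\sharp}$ be an optimal solution of $$\min_{\bm{y}\in\mathbb{R}^n}\ \|\bm{y}\|_1+\frac{1}{2\lambda}\|\bm{b}-A\bm{y}\|_2^2 .$$ Define $$\alpha_1=\frac{\sqrt{1+(k-1)\mu}}{1-(k-1)\mu},\qquad \alpha_2=\frac{\sqrt{k}\,\mu}{1-(k-1)\mu},$$ $$f_k(t)=kt^2+3\sqrt{k}\,t+3,\qquad g_k(t)=2kt^2+4\sqrt{k}\,t+1,$$ and $$\widehat{C}_1=\frac{2}{\sqrt{k}\alpha_1+1},\quad \widehat{C}_2=2(\sqrt{k}\alpha_1+1),\quad \widehat{C}_3=\frac{2\sqrt{k}\alpha_1 f_k(\alpha_2)+2g_k(\alpha_2)}{\sqrt{k}(1-\sqrt{k}\alpha_2)(\sqrt{k}\alpha_1+1)},$$ $$\widehat{C}_4=\frac{\big(\sqrt{k}\alpha_1(5+2\sqrt{k}\alpha_2)+g_k(\alpha_2)\big)(\sqrt{k}\alpha_1+1)}{\sqrt{k}(1-\sqrt{k}\alpha_2)}.$$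 Then $$\|A(\bm{x}^{\sharp}-\bm{x})\|_2\leq \widehat{C}_1\|\bm{x}-\bm{x}_{[k]}\|_1+\widehat{C}_2\lambda,\qquad \|\bm{x}^{\sharp}-\bm{x}\|_2\leq \widehat{C}_3\|\bm{x}-\bm{x}_{[k]}\|_1+\widehat{C}_4\lambda.$$
   Context: For $\bm{x}\in\mathbb{R}^n$, $\bm{x}_{[k]}$ denotes a best $k$-term approximation of $\bm{x}$, i.e. $\bm{x}_{[k]}\in\arg\min_{\|\bm{y}\|_0\leq k}\|\bm{y}-\bm{x}\|_2$, where $\|\bm{y}\|_0$ is the number of nonzero entries of $\bm{y}$. *)

From HB Require Import structures.
From mathcomp Require Import all_boot all_order all_algebra.
From mathcomp Require Import reals.
Set Implicit Arguments. Unset Strict Implicit. Unset Printing Implicit Defensive.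
Import Order.TTheory GRing.Theory Num.Theory.
Local Open Scope ring_scope.

Section Defs.
Variable R : realType.

Definition norm2 {n : nat} (v : 'cV[R]_n) : R := Num.sqrt (\sum_(i < n) v i 0 ^+ 2).
Definition norm1 {n : nat} (v : 'cV[R]_n) : R := \sum_(i < n) `|v i 0|.
Definition norm0 {n : nat} (v : 'cV[R]_n) : nat := #|[set i : 'I_n | v i 0 != 0]|.

Definition best_kterm {n : nat} (k : nat) (x xk : 'cV[R]_n) : Prop :=
  (norm0 xk <= k)%N /\
  forall y : 'cV[R]_n, (norm0 y <= k)%N -> norm2 (xk - x) <= norm2 (y - x).

Definition col_dot {m n : nat} (A : 'M[R]_(m, n)) (i j : 'I_n) : R :=
  \sum_(l < m) A l i * A l j.

(* mutual coherence: max over i < j of |<a_i, a_j>| (0 if n <= 1) *)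
Definition coherence {m n : nat} (A : 'M[R]_(m, n)) : R :=
  \big[Num.max/0]_(i < n) \big[Num.max/0]_(j < n | (i < j)%N) `|col_dot A i j|.

Definition lasso_obj {m n : nat} (A : 'M[R]_(m, n)) (b : 'cV[R]_m) (lam : R)
  (y : 'cV[R]_n) : R :=
  norm1 y + (2 * lam)^-1 * norm2 (b - A *m y) ^+ 2.

Definition fk (k : nat) (t : R) : R :=
  k%:R * t ^+ 2 + 3 * Num.sqrt k%:R * t + 3.
Definition gk (k : nat) (t : R) : R :=
  2 * k%:R * t ^+ 2 + 4 * Num.sqrt k%:R * t + 1.
End Defs.

(* Write h = x# - x and let T be the support of x_[k], on which x_[k] agrees
   with x.  Comparing the LASSO objective at x# and at x gives the basic
   inequality 2 lam (|x#|_1 - |x|_1) + |Ah|^2 <= 2 lam |Ah|, whose left side is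
   at least 2 lam (|h_T^c|_1 - |h_T|_1 - 2 |x - x_[k]|_1) + |Ah|^2.  Coherence
   mu < 1/(2k-1) makes A nearly isometric on k-sparse vectors, which yields the
   robust null space property |h_S|_2 <= alpha1 |Ah|_2 + alpha2 |h_S^c|_1 for
   every |S| <= k.  With S = T this turns the basic inequality into a quadratic
   inequality in |Ah|_2 (first bound) and bounds |h_T^c|_1; with S the k largest
   entries of h, for which 2 sqrt(k) |h_S^c|_2 <= |h|_1, it bounds |h|_2. *)

From HB Require Import structures.
From mathcomp Require Import all_boot all_order all_algebra.
From mathcomp Require Import reals ring lra.
Set Implicit Arguments. Unset Strict Implicit. Unset Printing Implicit Defensive.
Import Order.TTheory GRing.Theory Num.Theory.
Local Open Scope ring_scope.

Lemma sum_mul_sqr_le (R : realDomainType) (I : finType) (f g : I -> R) :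
  (\sum_i f i * g i) ^+ 2 <= (\sum_i f i ^+ 2) * (\sum_i g i ^+ 2).
Proof.
set a := \sum_i f i ^+ 2; set b := \sum_i f i * g i; set c := \sum_i g i ^+ 2.
have a_ge0 : 0 <= a by rewrite sumr_ge0 // => i _; rewrite sqr_ge0.
have [a0 | a_neq0] := eqVneq a 0.
  have f0 i : f i = 0.
    apply/eqP; rewrite -sqrf_eq0; apply/eqP.
    by apply: psumr_eq0P a0 _ _ => // j _; rewrite sqr_ge0.
  rewrite /b big1 => [|i _]; last by rewrite f0 mul0r.
  by rewrite expr0n mulr_ge0 // sumr_ge0 // => i _; rewrite sqr_ge0.
have : 0 <= a * (a * c - b ^+ 2).
  have -> : a * (a * c - b ^+ 2) = \sum_i (a * g i - b * f i) ^+ 2.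
    rewrite (eq_bigr (fun i => a ^+ 2 * g i ^+ 2 - 2 * a * b * (f i * g i)
                               + b ^+ 2 * f i ^+ 2)) => [|i _]; last by ring.
    by rewrite big_split sumrB /= -!mulr_sumr -/a -/b -/c; ring.
  by rewrite sumr_ge0 // => i _; rewrite sqr_ge0.
by rewrite pmulr_rge0 ?subr_ge0 // lt_def a_neq0.
Qed.

Section Vectors.
Variables (R : realType) (p : nat).
Implicit Types (u v w : 'cV[R]_p) (S : {set 'I_p}).

Definition dotv u v : R := \sum_i u i 0 * v i 0.

Definition restrict S v : 'cV[R]_p := \col_i (if i \in S then v i 0 else 0).

Lemma norm1_ge0 v : 0 <= norm1 v.
Proof. by rewrite sumr_ge0 // => i _; rewrite normr_ge0. Qed.

Lemma norm2_ge0 v : 0 <= norm2 v.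
Proof. exact: sqrtr_ge0. Qed.

Lemma norm2_sqr v : norm2 v ^+ 2 = dotv v v.
Proof.
rewrite sqr_sqrtr; last by rewrite sumr_ge0 // => i _; rewrite sqr_ge0.
by apply: eq_bigr => i _; rewrite expr2.
Qed.

Lemma dotvDr u v w : dotv u (v + w) = dotv u v + dotv u w.
Proof. by rewrite -big_split; apply: eq_bigr => i _; rewrite mxE mulrDr. Qed.

Lemma dotv_le_norm2 u v : dotv u v <= norm2 u * norm2 v.
Proof.
rewrite -sqrtrM ?sumr_ge0 // => [|i _]; last by rewrite sqr_ge0.
apply: le_trans (ler_norm _) _; rewrite -sqrtr_sqr ler_sqrt; last first.
  by rewrite mulr_ge0 // sumr_ge0 // => i _; rewrite sqr_ge0.
exact: sum_mul_sqr_le.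
Qed.

Lemma restrictE S v i : restrict S v i 0 = if i \in S then v i 0 else 0.
Proof. by rewrite mxE. Qed.

Lemma subr_restrict S v : v - restrict S v = restrict (~: S) v.
Proof.
apply/matrixP => i j; rewrite ord1 !mxE inE.
by case: (i \in S); rewrite ?subrr ?subr0.
Qed.

Lemma restrict_splitE S v : restrict S v + restrict (~: S) v = v.
Proof. by rewrite -subr_restrict addrC subrK. Qed.

Lemma norm1_restrict_split S v :
  norm1 v = norm1 (restrict S v) + norm1 (restrict (~: S) v).
Proof.
rewrite -big_split; apply: eq_bigr => i _ /=; rewrite !restrictE inE.
by case: (i \in S); rewrite normr0 ?addr0 ?add0r.
Qed.

Lemma norm2_sqr_restrict_split S v :
  norm2 v ^+ 2 = norm2 (restrict S v) ^+ 2 + norm2 (restrict (~: S) v) ^+ 2.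
Proof.
rewrite !norm2_sqr -big_split; apply: eq_bigr => i _ /=; rewrite !restrictE inE.
by case: (i \in S); rewrite mul0r ?addr0 ?add0r.
Qed.

Lemma norm2_le_restrict_split S v :
  norm2 v <= norm2 (restrict S v) + norm2 (restrict (~: S) v).
Proof.
rewrite -(ler_pXn2r (_ : 0 < 2)%N) ?nnegrE ?addr_ge0 ?norm2_ge0 //.
rewrite (norm2_sqr_restrict_split S) sqrrD lerD2r lerDl.
by rewrite mulrn_wge0 ?mulr_ge0 ?norm2_ge0.
Qed.

Lemma norm1_restrict_le (k : nat) S v : (#|S| <= k)%N ->
  norm1 (restrict S v) <= Num.sqrt k%:R * norm2 (restrict S v).
Proof.
move=> card_S; rewrite -sqrtrM ?ler0n // -[norm1 _]ger0_norm ?norm1_ge0 //.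
rewrite -sqrtr_sqr ler_sqrt ?mulr_ge0 ?ler0n ?sumr_ge0 // => [|i _]; last first.
  by rewrite sqr_ge0.
have := sum_mul_sqr_le (fun i => (i \in S)%:R) (fun i => `|restrict S v i 0|).
rewrite (eq_bigr (fun i => `|restrict S v i 0|)) => [|i _]; last first.
  by rewrite restrictE; case: (i \in S); rewrite ?mul1r ?normr0 ?mulr0.
move/le_trans; apply; apply: ler_pM.
- by rewrite sumr_ge0 // => i _; rewrite sqr_ge0.
- by rewrite sumr_ge0 // => i _; rewrite sqr_ge0.
- rewrite (eq_bigr (fun i => if i \in S then 1 else 0)) => [|i _]; last first.
    by case: (i \in S); rewrite ?expr1n ?expr0n.
  by rewrite -big_mkcond /= sumr_const ler_nat.
- by apply: ler_sum => i _; rewrite real_normK ?num_real.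
Qed.

Lemma norm1_restrict S v : norm1 (restrict S v) = \sum_(i in S) `|v i 0|.
Proof.
rewrite big_mkcond; apply: eq_bigr => i _ /=.
by rewrite restrictE; case: (i \in S); rewrite ?normr0.
Qed.

Lemma exists_heaviest_set (k : nat) v : exists2 S : {set 'I_p},
  (#|S| <= k)%N & forall j, j \notin S -> k%:R * `|v j 0| <= norm1 (restrict S v).
Proof.
pose small := [pred S : {set 'I_p} | (#|S| <= k)%N].
have small0 : set0 \in small by rewrite inE cards0.
case: (@arg_maxP _ R _ set0 small (fun S => \sum_(i in S) `|v i 0|) small0).
move=> S; rewrite inE => card_S S_max; exists S => // j j_notin_S.
rewrite norm1_restrict.
have [card_lt|card_ge] := ltnP #|S| k.
  have := S_max (j |: S); rewrite inE cardsU1 j_notin_S add1n => /(_ card_lt) /=.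
  rewrite big_setU1 //= gerDr => vj_le0.
  have -> : `|v j 0| = 0 by apply/eqP; rewrite eq_le vj_le0 normr_ge0.
  by rewrite mulr0 sumr_ge0.
have card_k : #|S| = k by apply/eqP; rewrite eqn_leq card_S.
(* Maximality against S with i exchanged for j gives |v_j| <= |v_i| for i in S. *)
rewrite mulr_natl -card_k -sumr_const; apply: ler_sum => i i_in_S.
have j_notin_Si : j \notin S :\ i by rewrite !inE negb_and j_notin_S orbT.
have card_Si : (#|S :\ i|).+1 = k by rewrite -card_k (cardsD1 i S) i_in_S.
have := S_max (j |: (S :\ i)).
rewrite inE cardsU1 j_notin_Si add1n card_Si leqnn => /(_ isT) /=.
by rewrite big_setU1 //= (big_setD1 i i_in_S) /= lerD2r.
Qed.

Lemma exists_tail_norm2_le (k : nat) v : exists2 S : {set 'I_p},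
  (#|S| <= k)%N & 2 * Num.sqrt k%:R * norm2 (restrict (~: S) v) <= norm1 v.
Proof.
have [S card_S heavy] := exists_heaviest_set k v; exists S => //.
set w := restrict (~: S) v; set V := norm1 (restrict S v).
have tail_sqr : k%:R * norm2 w ^+ 2 <= V * norm1 w.
  rewrite norm2_sqr /dotv /norm1 !mulr_sumr; apply: ler_sum => j _.
  rewrite /w restrictE inE; case: (boolP (j \in S)) => /= [_|j_notin_S].
    by rewrite mul0r normr0 !mulr0.
  rewrite -[_ * v j 0]expr2 -real_normK ?num_real // expr2 mulrA.
  by apply: ler_wpM2r; [exact: normr_ge0 | exact: heavy].
rewrite -(ler_pXn2r (_ : 0 < 2)%N) ?nnegrE ?norm1_ge0 //; last first.
  by rewrite !mulr_ge0 ?sqrtr_ge0 ?norm2_ge0.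
rewrite (norm1_restrict_split S) -/V -/w !exprMn sqr_sqrtr ?ler0n //.
have := sqr_ge0 (V - norm1 w); nra.
Qed.

Lemma norm2B_sqr u v :
  norm2 (u - v) ^+ 2 = norm2 u ^+ 2 - 2 * dotv u v + norm2 v ^+ 2.
Proof.
rewrite !norm2_sqr /dotv mulr_sumr -sumrB -big_split /=.
by apply: eq_bigr => i _; rewrite !mxE; ring.
Qed.

Lemma norm1_addr_restrict_ge S u h :
  norm1 (restrict (~: S) h) - norm1 (restrict S h) - 2 * norm1 (restrict (~: S) u)
    <= norm1 (u + h) - norm1 u.
Proof.
rewrite /norm1 mulr_sumr -!sumrB; apply: ler_sum => i _.
rewrite !restrictE !mxE inE; case: (i \in S) => /=; rewrite normr0.
- by have := ler_normB (u i 0 + h i 0) (h i 0); rewrite addrK; lra.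
- by have := ler_normB (u i 0 + h i 0) (u i 0); rewrite addrAC subrr add0r; lra.
Qed.

End Vectors.

Definition nsp_alpha1 (R : realType) (k : nat) (mu : R) : R :=
  Num.sqrt (1 + (k%:R - 1) * mu) / (1 - (k%:R - 1) * mu).
Definition nsp_alpha2 (R : realType) (k : nat) (mu : R) : R :=
  Num.sqrt k%:R * mu / (1 - (k%:R - 1) * mu).

Section Coherence.
Variables (R : realType) (m n : nat) (A : 'M[R]_(m, n)) (mu : R).
Hypothesis col_dot_diag : forall i, col_dot A i i = 1.
Hypothesis col_dot_offdiag : forall i j, i != j -> `|col_dot A i j| <= mu.
Implicit Types (v w h : 'cV[R]_n) (S : {set 'I_n}).

Lemma dotv_mulmx v w :
  dotv (A *m v) (A *m w) = \sum_i \sum_j v i 0 * w j 0 * col_dot A i j.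
Proof.
rewrite /dotv; under eq_bigr do rewrite !mxE big_distrlr /=.
rewrite exchange_big; apply: eq_bigr => i _.
rewrite exchange_big; apply: eq_bigr => j _.
by rewrite /col_dot mulr_sumr; apply: eq_bigr => l _; ring.
Qed.

Lemma dotv_mulmx_dev v w :
  `|dotv (A *m v) (A *m w) - dotv v w|
    <= mu * (norm1 v * norm1 w - \sum_i `|v i 0 * w i 0|).
Proof.
have -> : dotv (A *m v) (A *m w) - dotv v w =
    \sum_i \sum_(j | j != i) v i 0 * w j 0 * col_dot A i j.
  rewrite dotv_mulmx /dotv -sumrB; apply: eq_bigr => i _.
  by rewrite (bigD1 i) //= col_dot_diag mulr1 addrAC subrr add0r.
have -> : norm1 v * norm1 w - \sum_i `|v i 0 * w i 0| =
    \sum_i \sum_(j | j != i) `|v i 0| * `|w j 0|.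
  rewrite /norm1 big_distrl /= -sumrB; apply: eq_bigr => i _.
  by rewrite mulr_sumr (bigD1 i) //= normrM addrAC subrr add0r.
rewrite mulr_sumr; apply: le_trans (ler_norm_sum _ _ _) _; apply: ler_sum => i _.
rewrite mulr_sumr; apply: le_trans (ler_norm_sum _ _ _) _; apply: ler_sum => j ji.
by rewrite normrM mulrC normrM ler_wpM2r ?mulr_ge0 // col_dot_offdiag // eq_sym.
Qed.

Lemma norm2_mulmx_sqr_dev v :
  `|norm2 (A *m v) ^+ 2 - norm2 v ^+ 2| <= mu * (norm1 v ^+ 2 - norm2 v ^+ 2).
Proof.
have := dotv_mulmx_dev v v; rewrite !norm2_sqr.
suff -> : \sum_i `|v i 0 * v i 0| = dotv v v by rewrite expr2.
by apply: eq_bigr => i _; rewrite -expr2 ger0_norm ?sqr_ge0 // expr2.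
Qed.

Lemma dotv_mulmx_restrict_split S h :
  `|dotv (A *m restrict S h) (A *m restrict (~: S) h)|
    <= mu * (norm1 (restrict S h) * norm1 (restrict (~: S) h)).
Proof.
have disjoint i : restrict S h i 0 * restrict (~: S) h i 0 = 0.
  by rewrite !restrictE inE; case: (i \in S); rewrite ?mul0r ?mulr0.
have := dotv_mulmx_dev (restrict S h) (restrict (~: S) h).
rewrite [dotv (restrict _ _) _]big1 => [|i _]; last exact: disjoint.
by rewrite subr0 big1 ?subr0 // => i _; rewrite disjoint normr0.
Qed.

Variable k : nat.
Hypothesis k_gt0 : (0 < k)%N.
Hypothesis mu_ge0 : 0 <= mu.

Lemma restricted_isometry S h : (#|S| <= k)%N ->
  (1 - (k%:R - 1) * mu) * norm2 (restrict S h) ^+ 2 <= norm2 (A *m restrict S h) ^+ 2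
    <= (1 + (k%:R - 1) * mu) * norm2 (restrict S h) ^+ 2.
Proof.
move=> card_S; set v := restrict S h.
have l1_sqr : norm1 v ^+ 2 <= k%:R * norm2 v ^+ 2.
  rewrite -[k%:R](sqr_sqrtr (ler0n _ _)) -exprMn ler_pXn2r ?nnegrE ?norm1_ge0 //.
    exact: norm1_restrict_le.
  by rewrite mulr_ge0 ?sqrtr_ge0 ?norm2_ge0.
have := norm2_mulmx_sqr_dev v; rewrite ler_norml => /andP[lo hi].
have : mu * (norm1 v ^+ 2 - norm2 v ^+ 2) <= mu * (k%:R * norm2 v ^+ 2 - norm2 v ^+ 2).
  by rewrite ler_wpM2l // lerD2r.
by move=> dev; apply/andP; split; lra.
Qed.

Hypothesis den_gt0 : 0 < 1 - (k%:R - 1) * mu.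

Lemma robust_nsp S h : (#|S| <= k)%N ->
  norm2 (restrict S h) <=
    nsp_alpha1 k mu * norm2 (A *m h) + nsp_alpha2 k mu * norm1 (restrict (~: S) h).
Proof.
move=> card_S; set v := restrict S h; set w := restrict (~: S) h.
set K := 1 - (k%:R - 1) * mu; set L := 1 + (k%:R - 1) * mu.
have L_ge0 : 0 <= L by rewrite addr_ge0 ?mulr_ge0 // subr_ge0 ler1n.
have /andP[lo hi] := restricted_isometry h card_S; rewrite -/v -/K -/L in lo hi.
have Av_le : norm2 (A *m v) <= Num.sqrt L * norm2 v.
  rewrite -(ler_pXn2r (_ : 0 < 2)%N) ?nnegrE ?mulr_ge0 ?sqrtr_ge0 ?norm2_ge0 //.
  by rewrite exprMn (sqr_sqrtr L_ge0).
have cross : - dotv (A *m v) (A *m w) <= Num.sqrt k%:R * mu * norm2 v * norm1 w.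
  have := dotv_mulmx_restrict_split S h; rewrite ler_norml => /andP[dot_ge _].
  have := ler_wpM2l mu_ge0 (ler_wpM2r (norm1_ge0 w) (norm1_restrict_le h card_S)).
  lra.
(* [K |v|^2 <= |Av|^2 = <Av, Ah> - <Av, Aw>]: Cauchy-Schwarz and [Av_le] bound
   the first term, [cross] the second. *)
have key : K * norm2 v ^+ 2 <=
    norm2 v * (Num.sqrt L * norm2 (A *m h) + Num.sqrt k%:R * mu * norm1 w).
  have Ah : A *m h = A *m v + A *m w by rewrite -mulmxDr restrict_splitE.
  have := dotv_le_norm2 (A *m v) (A *m h).
  rewrite Ah dotvDr -norm2_sqr -Ah => dot_le.
  have := ler_wpM2r (norm2_ge0 (A *m h)) Av_le.
  have := norm2_ge0 (A *m h); have := norm2_ge0 v; nra.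
have K_v : K * norm2 v <= Num.sqrt L * norm2 (A *m h) + Num.sqrt k%:R * mu * norm1 w.
  have := norm2_ge0 v; rewrite le0r => /orP[/eqP v0 | v_gt0].
    by rewrite v0 mulr0 addr_ge0 ?mulr_ge0 ?sqrtr_ge0 ?norm2_ge0 ?norm1_ge0.
  by rewrite -(ler_pM2l v_gt0) mulrCA -expr2.
rewrite /nsp_alpha1 /nsp_alpha2 -/K -/L.
have -> : Num.sqrt L / K * norm2 (A *m h) + Num.sqrt k%:R * mu / K * norm1 w =
    (Num.sqrt L * norm2 (A *m h) + Num.sqrt k%:R * mu * norm1 w) / K by ring.
by rewrite ler_pdivlMr // mulrC.
Qed.

Lemma l1_robust_nsp S h : (#|S| <= k)%N ->
  norm1 (restrict S h) <=
    Num.sqrt k%:R * nsp_alpha1 k mu * norm2 (A *m h)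
    + Num.sqrt k%:R * nsp_alpha2 k mu * norm1 (restrict (~: S) h).
Proof.
move=> card_S; have := ler_wpM2l (sqrtr_ge0 (k%:R : R)) (robust_nsp h card_S).
by rewrite mulrDr !mulrA; apply: le_trans (norm1_restrict_le h card_S).
Qed.

Lemma norm2_le_nsp h :
  2 * Num.sqrt k%:R * norm2 h <=
    2 * Num.sqrt k%:R * nsp_alpha1 k mu * norm2 (A *m h)
    + (2 * Num.sqrt k%:R * nsp_alpha2 k mu + 1) * norm1 h.
Proof.
have [S card_S tail] := exists_tail_norm2_le k h.
have s_ge0 : 0 <= 2 * Num.sqrt (k%:R : R) by rewrite mulr_ge0 ?sqrtr_ge0.
have a2_ge0 : 0 <= nsp_alpha2 k mu.
  by apply: divr_ge0; [apply: mulr_ge0; rewrite ?sqrtr_ge0 | exact: ltW].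
have tail_l1 : norm1 (restrict (~: S) h) <= norm1 h.
  by rewrite (norm1_restrict_split S h) lerDr norm1_ge0.
have := ler_wpM2l s_ge0 (norm2_le_restrict_split S h).
have := ler_wpM2l s_ge0 (robust_nsp h card_S).
have := ler_wpM2l (mulr_ge0 s_ge0 a2_ge0) tail_l1.
rewrite !mulrDr !mulrA; lra.
Qed.

End Coherence.

Section CoherenceBounds.
Variables (R : realType) (m n : nat) (A : 'M[R]_(m, n)).

Lemma col_dotC i j : col_dot A i j = col_dot A j i.
Proof. by apply: eq_bigr => l _; rewrite mulrC. Qed.

Lemma coherence_ge0 : 0 <= coherence A.
Proof. exact: bigmax_ge_id. Qed.

Lemma col_dot_le_coherence i j : i != j -> `|col_dot A i j| <= coherence A.
Proof.
have lt_le (i' j' : 'I_n) : (i' < j')%N -> `|col_dot A i' j'| <= coherence A.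
  move=> lt_ij; apply: le_trans (le_bigmax _ _ i').
  exact: (le_bigmax_cond _ (fun j => `|col_dot A i' j|) lt_ij).
case: (ltngtP i j) => [/lt_le // | /lt_le | /val_inj->]; last by rewrite eqxx.
by rewrite col_dotC.
Qed.

Lemma col_dot_unit i : norm2 (col i A) = 1 -> col_dot A i i = 1.
Proof.
move=> col_unit; rewrite -[RHS](expr1n _ 2) -col_unit norm2_sqr.
by apply: eq_bigr => l _; rewrite !mxE.
Qed.

End CoherenceBounds.

Lemma best_kterm_restrict (R : realType) (n k : nat) (x xk : 'cV[R]_n) :
  best_kterm k x xk -> xk = restrict [set i | xk i 0 != 0] x.
Proof.
case=> sparse best; apply/matrixP => i j; rewrite ord1 restrictE inE.
have [-> //|xki_neq0] /= := eqVneq (xk i 0) 0.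
(* Changing [xk_i] into [x_i] does not enlarge the support, so it cannot
   decrease the distance to [x]. *)
pose y : 'cV[R]_n := \col_l (if l == i then x i 0 else xk l 0).
have y_sparse : (norm0 y <= k)%N.
  apply: leq_trans sparse; apply: subset_leq_card; apply/subsetP => l.
  by rewrite !inE mxE; case: (l =P i) => [->|]; rewrite ?xki_neq0.
have := best y y_sparse; rewrite /norm2 ler_sqrt ?sumr_ge0 // => [|l _]; last first.
  by rewrite sqr_ge0.
rewrite (bigD1 i) //= [X in _ <= X](bigD1 i) //= !mxE eqxx subrr expr0n add0r.
rewrite [X in _ <= X](eq_bigr (fun l => (xk - x) l 0 ^+ 2)) => [|l li]; last first.
  by rewrite !mxE (negbTE li).
rewrite gerDr => sqr_le0; apply/eqP; rewrite -subr_eq0 -sqrf_eq0 eq_le sqr_le0.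
exact: sqr_ge0.
Qed.

Lemma lasso_basic_ineq (R : realType) (m n : nat) (A : 'M[R]_(m, n)) (lam : R)
    (x xs : 'cV[R]_n) (z : 'cV[R]_m) :
  0 < lam -> norm2 z <= lam ->
  (forall y, lasso_obj A (A *m x + z) lam xs <= lasso_obj A (A *m x + z) lam y) ->
  2 * lam * (norm1 xs - norm1 x) + norm2 (A *m (xs - x)) ^+ 2
    <= 2 * lam * norm2 (A *m (xs - x)).
Proof.
move=> lam_gt0 z_le opt; have := opt x; rewrite /lasso_obj.
have -> : A *m x + z - A *m x = z by rewrite addrAC subrr add0r.
have -> : A *m x + z - A *m xs = z - A *m (xs - x).
  by rewrite mulmxBr opprB addrCA addrA.
rewrite norm2B_sqr -(ler_pM2l (_ : 0 < 2 * lam)) ?mulr_gt0 //.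
rewrite !mulrDr !mulrA mulfV ?gt_eqF ?mulr_gt0 // !mul1r.
have := ler_wpM2r (norm2_ge0 (A *m (xs - x))) z_le.
have := dotv_le_norm2 z (A *m (xs - x)).
lra.
Qed.

Section LassoArithmetic.
Variable R : realFieldType.

Lemma quadratic_root_le (p r t : R) :
  0 < p -> 0 <= r -> t ^+ 2 <= p * t + p * r -> t <= p + r.
Proof.
move=> p_gt0 r_ge0 quad; rewrite leNgt; apply/negP => lt.
have d_gt0 : 0 < t - (p + r) by rewrite subr_gt0.
have := mulr_gt0 d_gt0 (ltr_wpDr r_ge0 p_gt0).
have := mulr_ge0 (ltW d_gt0) r_ge0.
nra.
Qed.

Variables (b g l s u a c : R).

Lemma lasso_prediction_arith : 0 <= b -> g <= 1 -> 0 < l -> 0 <= s -> 0 <= c ->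
  2 * l * (c - a - 2 * s) + u ^+ 2 <= 2 * l * u -> a <= b * u + g * c ->
  (b + 1) * u <= 2 * s + 2 * (b + 1) ^+ 2 * l.
Proof.
move=> b_ge0 g_le1 l_gt0 s_ge0 c_ge0 basic cone.
have gc_le : l * (g * c) <= l * c by rewrite ler_pM2l // ler_piMl.
have la_le : l * a <= l * (b * u + g * c) by rewrite ler_pM2l.
have u_sqr : u ^+ 2 <= 2 * l * (b + 1) * u + 4 * l * s by lra.
rewrite [2 * s + _]addrC; apply: quadratic_root_le.
- by rewrite !mulr_gt0 ?exprn_gt0 // ltr_pwDr.
- by rewrite mulr_ge0.
- by have := ler_wpM2l (sqr_ge0 (b + 1)) u_sqr; rewrite !exprMn; lra.
Qed.

Lemma lasso_tail_arith : 0 < l ->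
  2 * l * (c - a - 2 * s) + u ^+ 2 <= 2 * l * u -> a <= b * u + g * c ->
  2 * (1 - g) * c <= 4 * s + (b + 1) ^+ 2 * l.
Proof.
move=> l_gt0 basic cone; rewrite -(ler_pM2l l_gt0).
have la_le : l * a <= l * (b * u + g * c) by rewrite ler_pM2l.
have := sqr_ge0 (u - l * (b + 1)); lra.
Qed.

Lemma lasso_error_arith (e : R) :
  0 <= b -> 0 <= g -> g < 1 -> 0 < l -> 0 <= s -> 0 <= c ->
  2 * l * (c - a - 2 * s) + u ^+ 2 <= 2 * l * u -> a <= b * u + g * c ->
  e <= 2 * b * u + (2 * g + 1) * (a + c) ->
  (1 - g) * (b + 1) * e <=
    2 * (2 * b * (g ^+ 2 + 3 * g + 3) + 2 * (2 * g ^+ 2 + 4 * g + 1)) * s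
    + 2 * (b + 1) ^+ 2 * (b * (5 + 2 * g) + (2 * g ^+ 2 + 4 * g + 1)) * l.
Proof.
move=> b_ge0 g_ge0 g_lt1 l_gt0 s_ge0 c_ge0 basic cone e_le.
have u_le := lasso_prediction_arith b_ge0 (ltW g_lt1) l_gt0 s_ge0 c_ge0 basic cone.
have c_le := lasso_tail_arith l_gt0 basic cone.
have g1_ge0 : 0 <= 2 * g + 1 by lra.
have e_le' : e <= b * (2 * g + 3) * u + (2 * g + 1) * (1 + g) * c.
  by have := ler_wpM2l g1_ge0 cone; lra.
have wt_e : 0 <= (1 - g) * (b + 1) by apply: mulr_ge0; lra.
have wt_u : 0 <= b * (2 * g + 3) * (1 - g) by rewrite !mulr_ge0 //; lra.
have wt_c : 0 <= (2 * g + 1) * (1 + g) * (b + 1) by rewrite !mulr_ge0 //; lra.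
have := ler_wpM2l wt_e e_le'; have := ler_wpM2l wt_u u_le.
have := ler_wpM2l wt_c c_le.
(* The claimed constants are not tight: these are the slacks in the
   coefficients of [s] and [l]. *)
have slack_s : 0 <= 4 * b * (g + 1) ^+ 2 + 4 * g ^+ 2 + 10 * g + 2.
  by have := mulr_ge0 b_ge0 (sqr_ge0 (g + 1)); have := sqr_ge0 g; lra.
have slack_l : 0 <= b * (7 + 9 * g + 6 * g ^+ 2) + 6 * g ^+ 2 + 13 * g + 3.
  have : 0 <= 7 + 9 * g + 6 * g ^+ 2 by have := sqr_ge0 g; lra.
  by move/(mulr_ge0 b_ge0); have := sqr_ge0 g; lra.
have := mulr_ge0 s_ge0 slack_s.
have := mulr_ge0 (mulr_ge0 (ltW l_gt0) (sqr_ge0 (b + 1))) slack_l.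
lra.
Qed.

End LassoArithmetic.

Definition lasso_C1 (R : realType) (k : nat) (mu : R) : R :=
  2 / (Num.sqrt k%:R * nsp_alpha1 k mu + 1).
Definition lasso_C2 (R : realType) (k : nat) (mu : R) : R :=
  2 * (Num.sqrt k%:R * nsp_alpha1 k mu + 1).
Definition lasso_C3 (R : realType) (k : nat) (mu : R) : R :=
  (2 * Num.sqrt k%:R * nsp_alpha1 k mu * fk k (nsp_alpha2 k mu)
     + 2 * gk k (nsp_alpha2 k mu))
  / (Num.sqrt k%:R * (1 - Num.sqrt k%:R * nsp_alpha2 k mu)
     * (Num.sqrt k%:R * nsp_alpha1 k mu + 1)).
Definition lasso_C4 (R : realType) (k : nat) (mu : R) : R :=
  ((Num.sqrt k%:R * nsp_alpha1 k mu * (5 + 2 * Num.sqrt k%:R * nsp_alpha2 k mu)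
      + gk k (nsp_alpha2 k mu)) * (Num.sqrt k%:R * nsp_alpha1 k mu + 1))
  / (Num.sqrt k%:R * (1 - Num.sqrt k%:R * nsp_alpha2 k mu)).

Section Constants.
Variables (R : realType) (k : nat) (mu : R).

Lemma fkE (t : R) :
  fk k t = (Num.sqrt k%:R * t) ^+ 2 + 3 * (Num.sqrt k%:R * t) + 3.
Proof. by rewrite /fk exprMn sqr_sqrtr ?ler0n //; ring. Qed.

Lemma gkE (t : R) :
  gk k t = 2 * (Num.sqrt k%:R * t) ^+ 2 + 4 * (Num.sqrt k%:R * t) + 1.
Proof. by rewrite /gk exprMn sqr_sqrtr ?ler0n //; ring. Qed.

Lemma nsp_den_gt0 : 0 <= mu -> (2 * k%:R - 1) * mu < 1 -> 0 < 1 - (k%:R - 1) * mu.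
Proof. by move=> mu_ge0 mu_small; have := mulr_ge0 (ler0n R k) mu_ge0; lra. Qed.

Lemma nsp_alpha1_ge0 : 0 <= mu -> (2 * k%:R - 1) * mu < 1 -> 0 <= nsp_alpha1 k mu.
Proof. by move=> *; rewrite divr_ge0 ?sqrtr_ge0 // ltW ?nsp_den_gt0. Qed.

Lemma nsp_alpha2_ge0 : 0 <= mu -> (2 * k%:R - 1) * mu < 1 -> 0 <= nsp_alpha2 k mu.
Proof. by move=> *; rewrite divr_ge0 ?mulr_ge0 ?sqrtr_ge0 // ltW ?nsp_den_gt0. Qed.

Lemma sqrt_nsp_alpha2_lt1 : 0 <= mu -> (2 * k%:R - 1) * mu < 1 ->
  Num.sqrt k%:R * nsp_alpha2 k mu < 1.
Proof.
move=> mu_ge0 mu_small; have den_gt0 := nsp_den_gt0 mu_ge0 mu_small.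
rewrite /nsp_alpha2 !mulrA -expr2 sqr_sqrtr ?ler0n // ltr_pdivrMr // mul1r; lra.
Qed.

End Constants.

Section LassoErrorBound.
Variables (R : realType) (m n k : nat) (A : 'M[R]_(m, n)) (mu : R).
Hypothesis col_dot_diag : forall i, col_dot A i i = 1.
Hypothesis col_dot_offdiag : forall i j, i != j -> `|col_dot A i j| <= mu.
Hypotheses (k_gt0 : (0 < k)%N) (mu_ge0 : 0 <= mu).
Hypothesis mu_small : (2 * k%:R - 1) * mu < 1.
Local Notation sk := (Num.sqrt (k%:R : R)).
Local Notation b := (sk * nsp_alpha1 k mu).
Local Notation g := (sk * nsp_alpha2 k mu).

Lemma basic_ineq_error_bound (lam : R) (x xs : 'cV[R]_n) (T : {set 'I_n}) :
  0 < lam -> (#|T| <= k)%N ->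
  2 * lam * (norm1 xs - norm1 x) + norm2 (A *m (xs - x)) ^+ 2
    <= 2 * lam * norm2 (A *m (xs - x)) ->
  norm2 (A *m (xs - x))
    <= lasso_C1 k mu * norm1 (restrict (~: T) x) + lasso_C2 k mu * lam /\
  norm2 (xs - x) <= lasso_C3 k mu * norm1 (restrict (~: T) x) + lasso_C4 k mu * lam.
Proof.
move=> lam_gt0 card_T basic.
have basic_T : 2 * lam * (norm1 (restrict (~: T) (xs - x)) - norm1 (restrict T (xs - x))
    - 2 * norm1 (restrict (~: T) x)) + norm2 (A *m (xs - x)) ^+ 2
    <= 2 * lam * norm2 (A *m (xs - x)).
  apply: le_trans basic; rewrite lerD2r ler_pM2l ?mulr_gt0 //.
  by have := norm1_addr_restrict_ge T x (xs - x); rewrite (addrC x) subrK.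
have s_ge0 := norm1_ge0 (restrict (~: T) x).
move: (xs - x) (norm1 (restrict (~: T) x)) s_ge0 basic_T => h s s_ge0 basic_T.
have den_gt0 := nsp_den_gt0 mu_ge0 mu_small.
have sk_gt0 : 0 < sk by rewrite sqrtr_gt0 ltr0n.
have b_ge0 : 0 <= b := mulr_ge0 (ltW sk_gt0) (nsp_alpha1_ge0 mu_ge0 mu_small).
have g_ge0 : 0 <= g := mulr_ge0 (ltW sk_gt0) (nsp_alpha2_ge0 mu_ge0 mu_small).
have g_lt1 : g < 1 := sqrt_nsp_alpha2_lt1 mu_ge0 mu_small.
have l1_nsp := l1_robust_nsp col_dot_diag col_dot_offdiag k_gt0 mu_ge0 den_gt0 h card_T.
have l2_nsp : 2 * sk * norm2 h <= 2 * b * norm2 (A *m h)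
    + (2 * g + 1) * (norm1 (restrict T h) + norm1 (restrict (~: T) h)).
  rewrite -norm1_restrict_split (mulrA 2 sk) (mulrA 2 sk).
  exact (norm2_le_nsp col_dot_diag col_dot_offdiag k_gt0 mu_ge0 den_gt0 h).
have c_ge0 := norm1_ge0 (restrict (~: T) h).
have b1_gt0 : 0 < b + 1 by rewrite ltr_pwDr.
split.
  have := lasso_prediction_arith b_ge0 (ltW g_lt1) lam_gt0 s_ge0 c_ge0 basic_T l1_nsp.
  have -> : lasso_C1 k mu * s + lasso_C2 k mu * lam =
      (2 * s + 2 * (b + 1) ^+ 2 * lam) / (b + 1).
    by rewrite /lasso_C1 /lasso_C2; field; rewrite gt_eqF.
  by rewrite ler_pdivlMr // mulrC.
have := lasso_error_arith b_ge0 g_ge0 g_lt1 lam_gt0 s_ge0 c_ge0 basic_T l1_nsp l2_nsp.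
have -> : lasso_C3 k mu * s + lasso_C4 k mu * lam =
    (2 * (2 * b * (g ^+ 2 + 3 * g + 3) + 2 * (2 * g ^+ 2 + 4 * g + 1)) * s
     + 2 * (b + 1) ^+ 2 * (b * (5 + 2 * g) + (2 * g ^+ 2 + 4 * g + 1)) * lam)
    / ((1 - g) * (b + 1) * (2 * sk)).
  rewrite /lasso_C3 /lasso_C4 fkE gkE; field.
  by rewrite !gt_eqF ?subr_gt0.
move=> err_le; rewrite ler_pdivlMr ?mulr_gt0 ?subr_gt0 //; lra.
Qed.

End LassoErrorBound.

Theorem corollary1 (R : realType) (m n k : nat) (A : 'M[R]_(m, n))
  (lam : R) (x : 'cV[R]_n) (z : 'cV[R]_m) (xs xk : 'cV[R]_n) :
  (2 <= k)%N ->
  (forall i : 'I_n, norm2 (col i A) = 1) ->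
  coherence A < 1 / (2 * k%:R - 1) ->
  0 < lam ->
  norm2 z <= lam ->
  (forall y : 'cV[R]_n, lasso_obj A (A *m x + z) lam xs <= lasso_obj A (A *m x + z) lam y) ->
  best_kterm k x xk ->
  let mu := coherence A in
  let sk := Num.sqrt (k%:R : R) in
  let alpha1 := Num.sqrt (1 + (k%:R - 1) * mu) / (1 - (k%:R - 1) * mu) in
  let alpha2 := sk * mu / (1 - (k%:R - 1) * mu) in
  let C1 := 2 / (sk * alpha1 + 1) in
  let C2 := 2 * (sk * alpha1 + 1) in
  let C3 := (2 * sk * alpha1 * fk k alpha2 + 2 * gk k alpha2)
            / (sk * (1 - sk * alpha2) * (sk * alpha1 + 1)) in
  let C4 := ((sk * alpha1 * (5 + 2 * sk * alpha2) + gk k alpha2) * (sk * alpha1 + 1))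
            / (sk * (1 - sk * alpha2)) in
  norm2 (A *m (xs - x)) <= C1 * norm1 (x - xk) + C2 * lam /\
  norm2 (xs - x) <= C3 * norm1 (x - xk) + C4 * lam.
Proof.
move=> k_ge2 unit_cols coh_small lam_gt0 z_le opt best mu sk alpha1 alpha2 C1 C2 C3 C4.
have k_gt0 : (0 < k)%N by apply: leq_trans k_ge2.
have mu_small : (2 * k%:R - 1) * mu < 1.
  have k2 : 2 <= (k%:R : R) by rewrite ler_nat.
  by rewrite mulrC -ltr_pdivlMr //; lra.
have [card_supp _] := best.
rewrite (_ : x - xk = restrict (~: [set i | xk i 0 != 0]) x); last first.
  by rewrite {1}(best_kterm_restrict best) subr_restrict.
apply: (basic_ineq_error_bound _ _ k_gt0 (coherence_ge0 A) mu_small lam_gt0 card_supp).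
- by move=> i; apply: col_dot_unit.
- exact: col_dot_le_coherence.
- exact: lasso_basic_ineq lam_gt0 z_le opt.
Qed.
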